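(* Consider the sparse sequence model and the weights $\phi_i$ described in the context, with $\lambda_n = O(n^{-(a+1)})$ as $n\to\infty$ for a constant $a>0$, and with $\alpha<2T$. Writing $S^\star = S_{\theta^\star}$, \[ \sum_{i=1}^n \mathsf{E}_{\theta_i^\star}\phi_i \le |S^\star| + o(1) \lesssim |S^\star|, \] where the $o(1)$ term is bounded by a quantity not depending on $\theta^\star$ that tends to $0$ as $n\to\infty$.
   Context: Model: one observes $Y_i = \theta_i + Z_i$, $i=1,\ldots,n$, where $\theta\in\mathbb{R}^n$ is unknown and $Z_1,\ldots,Z_n$ are iid copies of a random variable $Z$ with fully known distribution, mean zero, and subgaussian in the sense that $\mathsf{E}\exp(tZ) \le \exp(\sigma^2 t^2/2)$ for all $t\in\mathbb{R}$, for a known constant $\sigma>0$. $T>0$ denotes the upper endpoint of the interval on which the moment generating function of $(Z/\sigma)^2$ exists, i.e. $\mathsf{E} e^{t (Z/\sigma)^2}$ is finite (bounded by a constant) for $t\in(0,T]$. $\mathsf{E}_{\theta_i^\star}$ denotes expectation when $Y_i$ has mean $\theta_i^\star$. For $\theta\in\mathbb{R}^n$, $S_\theta=\{i:\theta_i\neq 0\}$. Weights: fix constants $\alpha\in(0,1)$, $\gamma>0$ and a sequence $\lambda_n\in(0,1)$, and define $\phi_i\in(0,1)$ by $\operatorname{logit}(\phi_i) = \operatorname{logit}(\lambda_n) + \tfrac12\log\tfrac{\gamma}{\alpha+\gamma} + \tfrac{\alpha}{2\sigma^2} Y_i^2$, with $\operatorname{logit}(p)=\log\{p/(1-p)\}$.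 *)

From HB Require Import structures.
From mathcomp Require Import all_boot all_order all_algebra.
From mathcomp Require Import all_classical all_reals all_analysis.
Set Implicit Arguments. Unset Strict Implicit. Unset Printing Implicit Defensive.
Import Order.TTheory GRing.Theory Num.Theory.
Local Open Scope ring_scope.

Definition logit {R : realType} (p : R) : R := ln (p / (1 - p)).

Definition expit {R : realType} (x : R) : R := (1 + expR (- x))^-1.

Definition phi_weight {R : realType} (lambda alpha gamma sigma y : R) : R :=
  expit (logit lambda + 2^-1 * ln (gamma / (alpha + gamma))
         + alpha / (2 * sigma ^+ 2) * y ^+ 2).

From HB Require Import structures.
From mathcomp Require Import all_boot all_order all_algebra.
From mathcomp Require Import all_classical all_reals all_analysis.
From mathcomp Require Import measurable_realfun ring lra.
Set Implicit Arguments. Unset Strict Implicit. Unset Printing Implicit Defensive.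
Import Order.TTheory GRing.Theory Num.Theory.
Import numFieldNormedType.Exports.
Local Open Scope classical_set_scope.
Local Open Scope ring_scope.

(* For a null coordinate, logit phi_i = logit lambda + b + (alpha/2) (Z/sigma)^2 with
   e^b = sqrt (gamma / (alpha + gamma)), and expit (logit l + x) <= l (e^x + 1); hence
   E phi_i <= lambda (e^b E[exp ((alpha/2) (Z/sigma)^2)] + 1) = lambda M, where M is finite
   because alpha/2 <= T.  A non-null coordinate contributes at most 1, so the sum is at most
   |S*| + n lambda_n M, and n lambda_n = O(n^-a) -> 0. *)

Section natr_powR.
Variable R : realType.

Lemma cvg_natr_powRN (a : R) : 0 < a -> (n%:R `^ (- a)) @[n --> \oo] --> 0.
Proof.
move=> a0.
have lnn_cvgy : (a * ln (n%:R : R)) @[n --> \oo] --> +oo.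
  apply/cvgryPge => A; near=> n.
  rewrite -ler_pdivrMl // -[X in X <= _]expRK ler_ln ?posrE ?expR_gt0 //.
    by rewrite mulrC; near: n; exact: nbhs_infty_ger.
  apply: lt_le_trans (expR_gt0 (A / a)) _.
  by rewrite mulrC; near: n; exact: nbhs_infty_ger.
apply: cvg_trans (cvg_comp _ _ lnn_cvgy (@cvgr_expR R)).
apply: near_eq_cvg; near=> n.
by rewrite /powR gt_eqF ?mulNr // ltr0n; near: n; exact: nbhs_infty_gt.
Unshelve. all: end_near. Qed.

Lemma natr_mul_cvg0 (u : nat -> R) (a C : R) : 0 < a -> (forall n, 0 <= u n) ->
    (\forall n \near \oo, u n <= C * n%:R `^ (- (a + 1))) ->
  (n%:R * u n) @[n --> \oo] --> 0.
Proof.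
move=> a0 u0 uC.
apply: (@squeeze_cvgr _ _ _ _ (cst 0) (fun n => C * n%:R `^ (- a))); last first.
- by rewrite -(mulr0 C); apply: cvgM; [exact: cvg_cst | exact: cvg_natr_powRN].
- exact: cvg_cst.
near=> n; have n0 : (0 : R) < n%:R by rewrite ltr0n; near: n; exact: nbhs_infty_gt.
rewrite mulr_ge0 ?u0 //=.
have -> : n%:R `^ (- a) = n%:R * n%:R `^ (- (a + 1)).
  rewrite opprD powRD ?powR_inv1 ?(gt_eqF n0) ?implybT // 1?ltW //.
  by rewrite mulrCA divff ?mulr1 // gt_eqF.
rewrite [leRHS]mulrCA; apply: ler_wpM2l; [exact: ltW | near: n; exact: uC].
Unshelve. all: end_near. Qed.
End natr_powR.

Section expit.
Variable R : realType.

Lemma expit_ge0 (x : R) : 0 <= expit x.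
Proof. by rewrite /expit invr_ge0 addr_ge0 ?expR_ge0. Qed.

Lemma expit_le1 (x : R) : expit x <= 1.
Proof. by rewrite /expit invf_le1 ?lerDl ?expR_ge0 // ltr_pwDr ?expR_gt0. Qed.

Lemma continuous_expit : continuous (@expit R).
Proof.
move=> x; apply: cvgV; first by rewrite gt_eqF // ltr_pwDr ?expR_gt0.
apply: cvgD; first exact: cvg_cst.
exact: cvg_comp (cvgN cvg_id) (@continuous_expR R (- x)).
Qed.

(* [expit (logit l + b) = l e^b / (l e^b + 1 - l)] and [l e^b + 1 - l >= min 1 e^b]. *)
Lemma expit_logitD_le (l b : R) : 0 < l < 1 -> expit (logit l + b) <= l * (expR b + 1).
Proof.
move=> /andP[l0 l1]; have q0 : 0 < l / (1 - l) by rewrite divr_gt0 // subr_gt0.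
have E0 := expR_gt0 b.
rewrite /expit /logit opprD expRD !expRN lnK ?posrE //.
have -> : 1 + (l / (1 - l))^-1 * (expR b)^-1 = (l * expR b + 1 - l) / (l * expR b).
  by field; rewrite !gt_eqF ?subr_gt0.
by rewrite invf_div ler_pdivrMr; nra.
Qed.
End expit.

Lemma continuous_phi_weight (R : realType) (l alpha gamma sigma : R) :
  continuous (phi_weight l alpha gamma sigma).
Proof.
move=> y; pose c := logit l + 2^-1 * ln (gamma / (alpha + gamma)).
apply: (cvg_comp (fun z => c + alpha / (2 * sigma ^+ 2) * z ^+ 2) expit);
  last exact: continuous_expit.
apply: cvgD; first exact: cvg_cst.
by apply: cvgM; [exact: cvg_cst | exact: exprn_continuous].
Qed.

Lemma phi_weight_le (R : realType) (l alpha gamma sigma y : R) :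
  0 < l < 1 -> sigma != 0 ->
  phi_weight l alpha gamma sigma y <=
  l * (expR (2^-1 * ln (gamma / (alpha + gamma))) * expR (alpha / 2 * (y / sigma) ^+ 2) + 1).
Proof.
move=> l01 s0; rewrite /phi_weight -addrA -expRD.
have -> : alpha / (2 * sigma ^+ 2) * y ^+ 2 = alpha / 2 * (y / sigma) ^+ 2 by field.
exact: expit_logitD_le.
Qed.

Section expectation.
Context d (T : measurableType d) (R : realType) (P : probability T R).
Local Open Scope ereal_scope.

Lemma expectation_le1 (X : T -> R) : measurable_fun setT X ->
  (forall x, 0 <= X x <= 1)%R -> 'E_P[X] <= 1.
Proof.
move=> mX X01; rewrite -(expectation_cst P 1).
apply: expectation_le => //; last apply: aeW.
all: by move=> x; case/andP: (X01 x).
Qed.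

Lemma expectation_affine_ge0 (X : T -> R) (c e : R) : measurable_fun setT X ->
    (forall x, 0 <= X x)%R -> (0 <= c)%R -> (0 <= e)%R ->
  'E_P[fun x => (c * X x + e)%R] = c%:E * 'E_P[X] + e%:E.
Proof.
move=> mX X0 c0 e0; rewrite !unlock.
under eq_integral do rewrite EFinD EFinM.
rewrite ge0_integralD //; last 2 first.
- by move=> x _; rewrite mule_ge0 ?lee_fin.
- by apply: emeasurable_funM => //; exact/measurable_EFinP.
rewrite ge0_integralZl ?integral_cst //= ?probability_setT ?mule1 //.
- exact/measurable_EFinP.
- by move=> x _; rewrite lee_fin.
Qed.
End expectation.

Section phi_weight_expectation.
Context d (T : measurableType d) (R : realType) (P : probability T R).
Variables (Z : T -> R) (l alpha gamma sigma K : R).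
Hypotheses (mZ : measurable_fun setT Z) (l01 : 0 < l < 1) (sigma_neq0 : sigma != 0).
Hypothesis EK : ('E_P[fun w => expR (alpha / 2 * (Z w / sigma) ^+ 2)] = K%:E)%E.

Lemma measurable_phi_weight (theta : R) :
  measurable_fun setT (fun w => phi_weight l alpha gamma sigma (theta + Z w)).
Proof.
apply: (measurableT_comp (f := fun y => phi_weight l alpha gamma sigma (theta + y))) mZ.
apply: continuous_measurable_fun => y.
apply: (cvg_comp (fun y => theta + y)); last exact: continuous_phi_weight.
by apply: cvgD; [exact: cvg_cst | exact: cvg_id].
Qed.

Lemma measurable_expR_sqr :
  measurable_fun setT (fun w => expR (alpha / 2 * (Z w / sigma) ^+ 2)).
Proof.
have cont : continuous (fun y : R => expR (alpha / 2 * (y / sigma) ^+ 2)).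
  move=> y; apply: (cvg_comp (fun y => alpha / 2 * (y / sigma) ^+ 2) expR);
    last exact: continuous_expR.
  apply: cvgM; first exact: cvg_cst.
  apply: (cvg_comp (fun y => y / sigma) (fun y => y ^+ 2)); last exact: exprn_continuous.
  by apply: cvgM; [exact: cvg_id | exact: cvg_cst].
exact: measurableT_comp (continuous_measurable_fun cont) mZ.
Qed.

Lemma expectation_phi_weight_null_le :
  ('E_P[fun w => phi_weight l alpha gamma sigma (Z w)] <=
   (l * (expR (2^-1 * ln (gamma / (alpha + gamma))) * K + 1))%:E)%E.
Proof.
have [l0 _] := andP l01; set A := expR _.
have lA0 : 0 <= l * A := mulr_ge0 (ltW l0) (expR_ge0 _).
apply: (@le_trans _ _
  ('E_P[fun w => (l * A * expR (alpha / 2 * (Z w / sigma) ^+ 2) + l)%R])%E).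
  apply: expectation_le.
  - by apply: eq_measurable_fun (measurable_phi_weight 0) => w _; rewrite add0r.
  - by apply: measurable_funD => //; apply: measurable_funM => //; exact: measurable_expR_sqr.
  - by move=> w; rewrite expit_ge0.
  - by move=> w; rewrite addr_ge0 ?mulr_ge0 ?expR_ge0 ?ltW.
  - apply: aeW => w; apply: le_trans (phi_weight_le _ _ _ l01 sigma_neq0) _.
    by rewrite mulrDr mulr1 mulrA.
rewrite (expectation_affine_ge0 P measurable_expR_sqr (fun w => expR_ge0 _) lA0 (ltW l0)).
by rewrite EK -EFinM -EFinD mulrDr mulr1 mulrA.
Qed.

Lemma expectation_phi_weight_le (theta : R) :
  ('E_P[fun w => phi_weight l alpha gamma sigma (theta + Z w)] <=
   ((theta != 0)%:R + l * (expR (2^-1 * ln (gamma / (alpha + gamma))) * K + 1))%:E)%E.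
Proof.
have [->|_] := eqVneq theta 0.
  under eq_fun do rewrite add0r.
  by rewrite add0r; exact: expectation_phi_weight_null_le.
apply: le_trans (expectation_le1 P (measurable_phi_weight theta) _) _.
  by move=> w; rewrite expit_ge0 expit_le1.
have K0 : 0 <= K by rewrite -lee_fin -EK expectation_ge0 // => w; exact: expR_ge0.
rewrite lee_fin /= lerDl; apply: mulr_ge0; first by case/andP: l01 => /ltW.
by rewrite addr_ge0 ?mulr_ge0 ?expR_ge0.
Qed.
End phi_weight_expectation.

Theorem lemma1 (d : measure_display) (Ω : measurableType d) (R : realType)
  (P : probability Ω R) (Z : {RV P >-> R}) (sigma T alpha gamma a : R)
  (lambda : nat -> R) :
  (* noise: mean zero, subgaussian with known sigma > 0 *)
  0 < sigma ->
  ('E_P[Z] = 0)%E ->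
  (forall t : R, ('E_P[fun w => expR (t * Z w)] <= (expR (sigma ^+ 2 * t ^+ 2 / 2))%:E)%E) ->
  (* the MGF of (Z/sigma)^2 is finite on (0, T] *)
  0 < T ->
  (forall t : R, 0 < t <= T ->
     ('E_P[fun w => expR (t * (Z w / sigma) ^+ 2)] < +oo)%E) ->
  (* constants of the weights *)
  0 < alpha < 1 -> 0 < gamma ->
  alpha < 2 * T ->
  (* lambda_n in (0,1) and lambda_n = O(n^{-(a+1)}) *)
  0 < a ->
  (forall n, 0 < lambda n < 1) ->
  (exists C : R, 0 < C /\
     \forall n \near \oo, lambda n <= C * (n%:R `^ (- (a + 1)))) ->
  exists eps : nat -> R, eps @ \oo --> 0 /\
    forall (n : nat) (theta : 'I_n -> R),
      (\sum_(i < n)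
          'E_P[fun w => phi_weight (lambda n) alpha gamma sigma (theta i + Z w)]
        <= (#|[pred i : 'I_n | theta i != 0]|%:R + eps n)%:E)%E.
Proof.
move=> sigma_gt0 _ _ _ mgf_fin /andP[alpha_gt0 _] _ alpha_lt2T a_gt0 lambda01.
move=> [C [_ lambdaC]].
have mZ : measurable_fun setT Z by exact: measurable_funPT.
have /fineK/esym EK : ('E_P[fun w => expR (alpha / 2 * (Z w / sigma) ^+ 2)] \is a fin_num)%E.
  rewrite ge0_fin_numE; last by apply: expectation_ge0 => w; exact: expR_ge0.
  by apply: mgf_fin; lra.
set K := fine _ in EK.
have K0 : 0 <= K by rewrite -lee_fin -EK expectation_ge0 // => w; exact: expR_ge0.
set M := expR (2^-1 * ln (gamma / (alpha + gamma))) * K + 1.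
have M0 : 0 <= M by rewrite addr_ge0 ?mulr_ge0 ?expR_ge0.
exists (fun n => n%:R * (lambda n * M)); split.
  apply: (natr_mul_cvg0 (C := C * M) a_gt0).
    by move=> n; rewrite mulr_ge0 // ltW //; case/andP: (lambda01 n).
  by near=> n; rewrite mulrAC ler_wpM2r //; near: n.
move=> n theta.
have phi_le (i : 'I_n) :
    ('E_P[fun w => phi_weight (lambda n) alpha gamma sigma (theta i + Z w)] <=
     ((theta i != 0)%:R + lambda n * M)%:E)%E.
  exact (expectation_phi_weight_le gamma mZ (lambda01 n) (lt0r_neq0 sigma_gt0) EK _).
apply: le_trans; first by apply: lee_sum => i _; exact: phi_le.
rewrite sumEFin lee_fin big_split /=; apply: lerD.
  rewrite -sumr_const [leRHS]big_mkcond; apply: ler_sum => i _.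
  by rewrite inE; case: (theta i != 0).
by rewrite sumr_const card_ord mulr_natl.
Unshelve. all: end_near. Qed.
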